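(* Let $A'B'C'D'$ be a tangential quadrilateral in the $uv$-plane, lying in the upper half-plane $v>0$, such that the lines $A'B'$ and $C'D'$ meet at $O=(0,0)$ and the lines $B'C'$ and $D'A'$ meet at $P=(1,0)$, where $O$ lies on ray $A'B'$ beyond $B'$ and on ray $D'C'$ beyond $C'$, and $P$ lies on ray $A'D'$ beyond $D'$ and on ray $B'C'$ beyond $C'$ (so that $\angle A'+\angle B'<\pi$ and $\angle A'+\angle D'<\pi$). Then for every $a>1$ there exist real numbers $x,y,l$ with $x+y>0$ and $l>0$ such that, with $T$ the map defined below (for this $a$), $$T(x,y)=A',\quad T(x+l,y)=B',\quad T(x+l,y+l)=C',\quad T(x,y+l)=D'.$$
   Context: For fixed $a>1$, $T$ is the map defined on $\{(x,y):x+y\neq0\}$ by $T(x,y)=(f(x,y),g(x,y))$ with $$f(x,y)=\frac{a^x(a^{2y}-1)}{(a^x+a^y)(a^{x+y}-1)},\qquad g(x,y)=\frac{2a^{x+y}}{(a^x+a^y)(a^{x+y}-1)}.$$ A quadrilateral is tangential if it admits an inscribed circle tangent to all four sides; equivalently, the sums of the lengths of the two pairs of opposite sides are equal. Every tangential quadrilateral with no pair of parallel sides can be brought into the position described (lines of opposite sides meeting at $O$ and $P$ as specified, in the upper half-plane) by a similarity and a suitable labelling of its vertices. *)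

From Stdlib Require Import Reals.
Open Scope R_scope.

Definition point := (R * R)%type.

Definition apow (a t : R) : R := Rpower a t.

Definition fT (a x y : R) : R :=
  apow a x * (apow a (2 * y) - 1) / ((apow a x + apow a y) * (apow a (x + y) - 1)).

Definition gT (a x y : R) : R :=
  2 * apow a (x + y) / ((apow a x + apow a y) * (apow a (x + y) - 1)).

(* The map T (meaningful on x + y <> 0) *)
Definition T (a x y : R) : point := (fT a x y, gT a x y).

Definition dist (p q : point) : R :=
  sqrt ((fst p - fst q) ^ 2 + (snd p - snd q) ^ 2).

Definition beyond (X Y Z : point) : Prop :=
  exists t : R, 1 < t /\
    fst Z = fst X + t * (fst Y - fst X) /\ snd Z = snd X + t * (snd Y - snd X).

(* Tangential quadrilateral ABCD (sides AB, BC, CD, DA): Pitot condition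
   |AB| + |CD| = |BC| + |DA|, given as an equivalent definition in the paper. *)
Definition tangential (A B C D : point) : Prop :=
  dist A B + dist C D = dist B C + dist D A.

(* Write X = a^x and Y = a^y; then T(x, y) = Phi X Y for an explicit rational
   map Phi.  Phi is inverted on the upper half-plane by "bipolar" coordinates:
   Y is the cotangent of half the angle of the ray O->z, and X is the cotangent
   of half the angle of the ray P->z (measured from the other side).  So Y is
   constant on rays through O and X on rays through P, and the hypotheses put
   the vertices at Phi X1 Y1, Phi X2 Y1, Phi X2 Y2, Phi X1 Y2 with X1 < X2.
   The distances |z - O| and |z - P| are rational in (X, Y), and the sides of
   the quadrilateral are differences of them along the rays; the Pitot
   condition then factors as (X2 Y1 - X1 Y2) times a positive quantity, so the
   rectangle in (X, Y) has X2/X1 = Y2/Y1 =: m, i.e. it is a square of side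
   log_a m in (x, y). *)

From Stdlib Require Import Reals Lra Psatz.
Open Scope R_scope.

Definition norm2 (u1 u2 : R) : R := sqrt (u1 ^ 2 + u2 ^ 2).

Lemma dist_norm2 (p q : point) :
  dist p q = norm2 (fst p - fst q) (snd p - snd q).
Proof. reflexivity. Qed.

Lemma dist_sym (p q : point) : dist p q = dist q p.
Proof.
  rewrite !dist_norm2; unfold norm2; f_equal; ring.
Qed.

Lemma norm2_spec (u1 u2 : R) : 0 < u2 ->
  norm2 u1 u2 * norm2 u1 u2 = u1 ^ 2 + u2 ^ 2 /\
  u1 < norm2 u1 u2 /\ - u1 < norm2 u1 u2.
Proof.
  intro Hu2; unfold norm2.
  assert (Hsq : sqrt (u1 ^ 2 + u2 ^ 2) * sqrt (u1 ^ 2 + u2 ^ 2) = u1 ^ 2 + u2 ^ 2)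
    by (apply sqrt_sqrt; nra).
  pose proof (sqrt_pos (u1 ^ 2 + u2 ^ 2)).
  repeat split; nra.
Qed.

Lemma norm2_scale (k u1 u2 : R) : 0 <= k ->
  norm2 (k * u1) (k * u2) = k * norm2 u1 u2.
Proof.
  intro Hk; unfold norm2.
  replace ((k * u1) ^ 2 + (k * u2) ^ 2) with ((k * k) * (u1 ^ 2 + u2 ^ 2)) by ring.
  rewrite sqrt_mult by nra; rewrite sqrt_square by lra; reflexivity.
Qed.

Lemma beyond_between (X Y Z : point) : beyond X Y Z ->
  exists s, 0 < s < 1 /\
    fst Y - fst Z = s * (fst X - fst Z) /\ snd Y - snd Z = s * (snd X - snd Z).
Proof.
  intros [t [Ht [HZ1 HZ2]]].
  exists (1 - / t).
  assert (Hinv : 0 < / t < 1).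
  { split; [apply Rinv_0_lt_compat; lra|].
    rewrite <- Rinv_1; apply Rinv_lt_contravar; lra. }
  split; [lra|].
  rewrite HZ1, HZ2; split; field; lra.
Qed.

Lemma beyond_dist (X Y Z : point) : beyond X Y Z ->
  dist X Z = dist X Y + dist Y Z.
Proof.
  intro Hb; destruct (beyond_between X Y Z Hb) as [s [Hs [H1 H2]]].
  rewrite !dist_norm2.
  replace (fst X - fst Y) with ((1 - s) * (fst X - fst Z)) by lra.
  replace (snd X - snd Y) with ((1 - s) * (snd X - snd Z)) by lra.
  rewrite H1, H2, !norm2_scale by lra; ring.
Qed.

(* For u2 > 0, [halfcot u1 u2] is cot(phi/2), phi the polar angle of (u1, u2). *)
Definition halfcot (u1 u2 : R) : R := (u1 + norm2 u1 u2) / u2.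

Lemma halfcot_scale (k u1 u2 : R) : 0 < k -> 0 < u2 ->
  halfcot (k * u1) (k * u2) = halfcot u1 u2.
Proof.
  intros Hk Hu2; unfold halfcot; rewrite norm2_scale by lra; field; lra.
Qed.

Lemma halfcot_spec (u1 u2 : R) : 0 < u2 ->
  0 < halfcot u1 u2 /\
  u2 * (halfcot u1 u2 ^ 2 - 1) = 2 * u1 * halfcot u1 u2 /\
  u2 * (halfcot u1 u2 ^ 2 + 1) = 2 * norm2 u1 u2 * halfcot u1 u2.
Proof.
  intro Hu2; destruct (norm2_spec u1 u2 Hu2) as [Hn [Hn1 Hn2]].
  assert (Hh : halfcot u1 u2 * u2 = u1 + norm2 u1 u2)
    by (unfold halfcot; field; lra).
  set (h := halfcot u1 u2) in *; set (n := norm2 u1 u2) in *.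
  clearbody h n.
  assert (0 < h) by nra.
  repeat split; nra.
Qed.

(* Moving a point z of the upper half-plane towards O (z |-> s z, 0 < s < 1)
   strictly increases the half-angle cotangent of its direction seen from P;
   the key inequality is s |z - P| < |s z - P| + 1 - s. *)
Lemma halfcot_toward_O (s z1 z2 : R) : 0 < s < 1 -> 0 < z2 ->
  halfcot (1 - z1) z2 < halfcot (1 - s * z1) (s * z2).
Proof.
  intros Hs Hz; assert (Hsz : 0 < s * z2) by nra.
  destruct (norm2_spec (1 - z1) z2 Hz) as [Hq2 [Hq1 Hq1']].
  destruct (norm2_spec (1 - s * z1) (s * z2) Hsz) as [Hs2 [Hs1 Hs1']].
  unfold halfcot.
  set (q := norm2 (1 - z1) z2) in *; set (qs := norm2 (1 - s * z1) (s * z2)) in *.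
  clearbody q qs.
  assert (Hlt : s * q < qs + 1 - s) by nra.
  apply (Rmult_lt_reg_r (s * z2)); [lra|].
  replace ((1 - z1 + q) / z2 * (s * z2)) with (s * (1 - z1 + q)) by (field; lra).
  replace ((1 - s * z1 + qs) / (s * z2) * (s * z2)) with (1 - s * z1 + qs)
    by (field; lra).
  lra.
Qed.

Definition O : point := (0, 0).
Definition P : point := (1, 0).

Definition coordX (z : point) : R := halfcot (1 - fst z) (snd z).
Definition coordY (z : point) : R := halfcot (fst z) (snd z).

Lemma dist_O (z : point) : dist z O = norm2 (fst z) (snd z).
Proof. rewrite dist_norm2; unfold norm2, O; simpl; f_equal; ring. Qed.

Lemma dist_P (z : point) : dist z P = norm2 (1 - fst z) (snd z).
Proof.
  rewrite dist_norm2; unfold norm2, P; simpl; f_equal; ring.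
Qed.

Lemma coordY_ray_O (Z W : point) : 0 < snd Z -> beyond Z W O ->
  coordY W = coordY Z.
Proof.
  intros HZ Hb; destruct (beyond_between Z W O Hb) as [s [Hs [H1 H2]]].
  unfold O in H1, H2; simpl in H1, H2.
  unfold coordY; replace (fst W) with (s * fst Z) by lra.
  replace (snd W) with (s * snd Z) by lra.
  apply halfcot_scale; lra.
Qed.

Lemma coordX_ray_P (Z W : point) : 0 < snd Z -> beyond Z W P ->
  coordX W = coordX Z.
Proof.
  intros HZ Hb; destruct (beyond_between Z W P Hb) as [s [Hs [H1 H2]]].
  unfold P in H1, H2; simpl in H1, H2.
  unfold coordX; replace (1 - fst W) with (s * (1 - fst Z)) by lra.
  replace (snd W) with (s * snd Z) by lra.
  apply halfcot_scale; lra.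
Qed.

Lemma coordX_ray_O (Z W : point) : 0 < snd Z -> beyond Z W O ->
  coordX Z < coordX W.
Proof.
  intros HZ Hb; destruct (beyond_between Z W O Hb) as [s [Hs [H1 H2]]].
  unfold O in H1, H2; simpl in H1, H2.
  unfold coordX; replace (fst W) with (s * fst Z) by lra.
  replace (snd W) with (s * snd Z) by lra.
  apply halfcot_toward_O; lra.
Qed.

Definition Phi (X Y : R) : point :=
  (X * (Y * Y - 1) / ((X + Y) * (X * Y - 1)), 2 * (X * Y) / ((X + Y) * (X * Y - 1))).

(* Distances of Phi X Y from O and from P. *)
Definition radO (X Y : R) : R := X * (Y * Y + 1) / ((X + Y) * (X * Y - 1)).
Definition radP (X Y : R) : R := Y * (X * X + 1) / ((X + Y) * (X * Y - 1)).

Lemma T_Phi (a x y : R) : T a x y = Phi (apow a x) (apow a y).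
Proof.
  unfold T, fT, gT, Phi, apow.
  replace (2 * y) with (y + y) by ring.
  rewrite !Rpower_plus; reflexivity.
Qed.

Lemma ln_pos_gt1 (x : R) : 1 < x -> 0 < ln x.
Proof. intro Hx; rewrite <- ln_1; apply ln_increasing; lra. Qed.

Lemma apow_log (a X : R) : 1 < a -> 0 < X -> apow a (ln X / ln a) = X.
Proof.
  intros Ha HX; unfold apow, Rpower; pose proof (ln_pos_gt1 a Ha).
  replace (ln X / ln a * ln a) with (ln X) by (field; lra).
  apply exp_ln; exact HX.
Qed.

Lemma Phi_of_halfangles (X Y z1 z2 r q : R) : 0 < X -> 0 < Y -> 0 < z2 ->
  z2 * (Y ^ 2 - 1) = 2 * z1 * Y -> z2 * (Y ^ 2 + 1) = 2 * r * Y ->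
  z2 * (X ^ 2 - 1) = 2 * (1 - z1) * X -> z2 * (X ^ 2 + 1) = 2 * q * X ->
  Phi X Y = (z1, z2) /\ r = radO X Y /\ q = radP X Y.
Proof.
  intros HX HY Hz HY1 HY2 HX1 HX2.
  (* (X + Y)(XY - 1) = Y (X^2 - 1) + X (Y^2 - 1) = 2XY / z2 *)
  assert (Hden : (X + Y) * (X * Y - 1) = 2 * X * Y / z2).
  { apply (Rmult_eq_reg_l z2); [|lra].
    replace (z2 * ((X + Y) * (X * Y - 1)))
      with (Y * (z2 * (X ^ 2 - 1)) + X * (z2 * (Y ^ 2 - 1))) by ring.
    rewrite HY1, HX1; field; lra. }
  unfold Phi, radO, radP; rewrite Hden.
  replace (Y * Y) with (Y ^ 2) by ring; replace (X * X) with (X ^ 2) by ring.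
  replace (Y ^ 2 - 1) with (2 * z1 * Y / z2) by (field_simplify_eq; lra).
  replace (Y ^ 2 + 1) with (2 * r * Y / z2) by (field_simplify_eq; lra).
  replace (X ^ 2 + 1) with (2 * q * X / z2) by (field_simplify_eq; lra).
  repeat split; [f_equal| |]; field; repeat split; lra.
Qed.

Lemma coord_inverse (z : point) : 0 < snd z ->
  0 < coordX z /\ 0 < coordY z /\ 1 < coordX z * coordY z /\
  Phi (coordX z) (coordY z) = z /\
  dist z O = radO (coordX z) (coordY z) /\ dist z P = radP (coordX z) (coordY z).
Proof.
  destruct z as [z1 z2]; simpl; intro Hz.
  rewrite dist_O, dist_P; unfold coordX, coordY; simpl.
  destruct (halfcot_spec (1 - z1) z2 Hz) as [HX [HX1 HX2]].
  destruct (halfcot_spec z1 z2 Hz) as [HY [HY1 HY2]].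
  destruct (Phi_of_halfangles _ _ z1 z2 _ _ HX HY Hz HY1 HY2 HX1 HX2)
    as [HPhi [Hr Hq]].
  (* XY > 1 amounts to the strict triangle inequality |z| < 1 + |z - P|. *)
  assert (HXY : 1 < halfcot (1 - z1) z2 * halfcot z1 z2).
  { destruct (norm2_spec z1 z2 Hz) as [Hr2 [Hr1 Hr1']].
    destruct (norm2_spec (1 - z1) z2 Hz) as [Hq2 [Hq1 Hq1']].
    assert (EX : halfcot (1 - z1) z2 * z2 = 1 - z1 + norm2 (1 - z1) z2)
      by (unfold halfcot; field; lra).
    assert (EY : halfcot z1 z2 * z2 = z1 + norm2 z1 z2)
      by (unfold halfcot; field; lra).
    set (r := norm2 z1 z2) in *; set (q := norm2 (1 - z1) z2) in *.
    set (Xz := halfcot (1 - z1) z2) in *; set (Yz := halfcot z1 z2) in *.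
    clearbody r q Xz Yz.
    assert (Hrq : r < 1 + q) by nra.
    assert (Hprod : (Xz * z2) * (Yz * z2) > z2 * z2) by (rewrite EX, EY; nra).
    nra. }
  repeat split; auto.
Qed.

Lemma pitot_defect (X1 X2 Y1 Y2 : R) :
  0 < X1 -> 0 < X2 -> 0 < Y1 -> 0 < Y2 ->
  1 < X1 * Y1 -> 1 < X2 * Y1 -> 1 < X2 * Y2 -> 1 < X1 * Y2 ->
  (radO X1 Y1 - radO X2 Y1) + (radO X1 Y2 - radO X2 Y2)
  - ((radP X2 Y1 - radP X2 Y2) + (radP X1 Y1 - radP X1 Y2))
  = 2 * (X2 * Y1 - X1 * Y2) *
    (1 / ((X1 + Y1) * (X2 + Y2)) + 1 / ((X1 * Y2 - 1) * (X2 * Y1 - 1))).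
Proof.
  intros; unfold radO, radP; field; repeat split; nra.
Qed.

Lemma pitot_square (X1 X2 Y1 Y2 : R) :
  0 < X1 -> 0 < X2 -> 0 < Y1 -> 0 < Y2 ->
  1 < X1 * Y1 -> 1 < X2 * Y1 -> 1 < X2 * Y2 -> 1 < X1 * Y2 ->
  (radO X1 Y1 - radO X2 Y1) + (radO X1 Y2 - radO X2 Y2)
  = (radP X2 Y1 - radP X2 Y2) + (radP X1 Y1 - radP X1 Y2) ->
  X2 * Y1 = X1 * Y2.
Proof.
  intros HX1 HX2 HY1 HY2 H11 H21 H22 H12 Hpitot.
  pose proof (pitot_defect X1 X2 Y1 Y2 HX1 HX2 HY1 HY2 H11 H21 H22 H12) as Hd.
  rewrite Hpitot, Rminus_diag in Hd.
  assert (0 < 1 / ((X1 + Y1) * (X2 + Y2))) by (apply Rdiv_lt_0_compat; nra).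
  assert (0 < 1 / ((X1 * Y2 - 1) * (X2 * Y1 - 1))) by (apply Rdiv_lt_0_compat; nra).
  nra.
Qed.

Lemma quadrilateral_square (A B C D : point) :
  tangential A B C D ->
  0 < snd A -> 0 < snd B -> 0 < snd C -> 0 < snd D ->
  beyond A B O -> beyond D C O -> beyond A D P -> beyond B C P ->
  exists X Y m, 0 < X /\ 0 < Y /\ 1 < X * Y /\ 1 < m /\
    A = Phi X Y /\ B = Phi (X * m) Y /\ C = Phi (X * m) (Y * m) /\ D = Phi X (Y * m).
Proof.
  intros Htan HA HB HC HD HAB HDC HAD HBC.
  destruct (coord_inverse A HA) as [XA [YA [XYA [PhiA [OA PA]]]]].
  destruct (coord_inverse B HB) as [XB [YB [XYB [PhiB [OB PB]]]]].
  destruct (coord_inverse C HC) as [XC [YC [XYC [PhiC [OC PC]]]]].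
  destruct (coord_inverse D HD) as [XD [YD [XYD [PhiD [OD PD]]]]].
  (* Each side is a difference of radii along a ray through O or P. *)
  unfold tangential in Htan; rewrite (dist_sym C D), (dist_sym D A) in Htan.
  rewrite (beyond_dist _ _ _ HAB) in OA; rewrite (beyond_dist _ _ _ HDC) in OD.
  rewrite (beyond_dist _ _ _ HAD) in PA; rewrite (beyond_dist _ _ _ HBC) in PB.
  rewrite (coordY_ray_O A B HA HAB), (coordX_ray_P A D HA HAD) in *.
  rewrite (coordY_ray_O D C HD HDC), (coordX_ray_P B C HB HBC) in *.
  pose proof (coordX_ray_O A B HA HAB) as Hlt.
  set (X1 := coordX A) in *; set (X2 := coordX B) in *.
  set (Y1 := coordY A) in *; set (Y2 := coordY D) in *.
  assert (Hsq : X2 * Y1 = X1 * Y2)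
    by (apply pitot_square; auto; lra).
  exists X1, Y1, (X2 / X1).
  assert (HY2 : Y1 * (X2 / X1) = Y2)
    by (apply (Rmult_eq_reg_r X1); [|lra]; field_simplify; lra).
  replace (X1 * (X2 / X1)) with X2 by (field; lra).
  rewrite HY2; repeat split; auto.
  apply (Rmult_lt_reg_r X1); [lra|]; field_simplify; lra.
Qed.

Lemma T_square (a X Y m : R) : 1 < a -> 0 < X -> 0 < Y -> 1 < X * Y -> 1 < m ->
  exists x y l, 0 < x + y /\ 0 < l /\
    T a x y = Phi X Y /\ T a (x + l) y = Phi (X * m) Y /\
    T a (x + l) (y + l) = Phi (X * m) (Y * m) /\ T a x (y + l) = Phi X (Y * m).
Proof.
  intros Ha HX HY HXY Hm; pose proof (ln_pos_gt1 a Ha) as Hla.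
  exists (ln X / ln a), (ln Y / ln a), (ln m / ln a).
  rewrite !T_Phi, !Rpower_plus; fold (apow a).
  rewrite !apow_log by lra.
  repeat split; try reflexivity.
  - replace (ln X / ln a + ln Y / ln a) with (ln (X * Y) / ln a)
      by (rewrite ln_mult by lra; field; lra).
    apply Rdiv_lt_0_compat; [apply ln_pos_gt1|]; lra.
  - apply Rdiv_lt_0_compat; [apply ln_pos_gt1|]; lra.
Qed.

Theorem theorem6p2 (A B C D : point) :
  tangential A B C D ->
  0 < snd A -> 0 < snd B -> 0 < snd C -> 0 < snd D ->
  beyond A B (0, 0) -> beyond D C (0, 0) ->
  beyond A D (1, 0) -> beyond B C (1, 0) ->
  forall a : R, 1 < a ->
  exists x y l : R, 0 < x + y /\ 0 < l /\
    T a x y = A /\ T a (x + l) y = B /\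
    T a (x + l) (y + l) = C /\ T a x (y + l) = D.
Proof.
  intros Htan HA HB HC HD HAB HDC HAD HBC a Ha.
  destruct (quadrilateral_square A B C D Htan HA HB HC HD HAB HDC HAD HBC)
    as [X [Y [m [HX [HY [HXY [Hm [-> [-> [-> ->]]]]]]]]]].
  exact (T_square a X Y m Ha HX HY HXY Hm).
Qed.
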